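(* Let $((f_t),(g_t),(h_t))$ be a $W_{1,+}$-geodesic on $G$, let $x\in G$, $\gamma\in\mathrm{SE}\Gamma_{1,x}$ and $\tilde\gamma\in\mathrm{SE}\Gamma_{2,x}$. Then for all $t\in[0,1]$, $$f_t(x)=\frac{C_\gamma(t)\,C_{\tilde\gamma}(t)}{C_{\gamma\cup\tilde\gamma}},$$ where $\gamma\cup\tilde\gamma$ is the concatenation of $\gamma$ and $\tilde\gamma$ (an extremal path, for which $C_{\gamma\cup\tilde\gamma}(t)$ is constant).
   Context: $G$ is a connected, locally finite graph with graph distance $d$; geodesics are paths of adjacent vertices $\gamma(0),\dots,\gamma(n)$ with $n=d(\gamma(0),\gamma(n))$, $L(\gamma)=n$, $e_0(\gamma)=\gamma(0)$, $e_1(\gamma)=\gamma(n)$. For finitely supported probability distributions $f_0,f_1$: $\Pi_1(f_0,f_1)$ = couplings minimizing $\sum d(x,y)\pi(x,y)$ (minimum $W_1$), $\mathcal{C}(f_0,f_1)=\{(x,y):\pi(x,y)>0$ for some $\pi\in\Pi_1\}$; $W_1$-orientation: adjacent $x,y$ get $x\to y$ iff some geodesic $\gamma$ with $(e_0(\gamma),e_1(\gamma))\in\mathcal{C}(f_0,f_1)$ has $\gamma(k)=x,\gamma(k+1)=y$. Oriented paths: $\gamma(i)\to\gamma(i+1)$; $\gamma_i=\gamma(i)$. $E(G)=\{(xy):x\to y\}$, $T(G)$ triples $x_0\to x_1\to x_2$, $\mathcal{F}(x)=\{y:x\to y\}$, $\mathcal{E}(x)=\{y:y\to x\}$; $\nabla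 g(x_1)=\sum_{\mathcal{F}(x_1)}g(x_1x_2)-\sum_{\mathcal{E}(x_1)}g(x_0x_1)$, $\nabla h(x_1x_2)=\sum_{x_3\in\mathcal{F}(x_2)}h(x_1x_2x_3)-\sum_{x_0\in\mathcal{E}(x_1)}h(x_0x_1x_2)$. $W_{1,+}$-geodesic: a family $(f_t)_{t\in[0,1]}$ from $f_0$ to $f_1$ with $W_1(f_s,f_t)=|t-s|W_1(f_0,f_1)$ (graph $W_1$-oriented w.r.t. $(f_0,f_1)$), differentiable in $t$, with $g_t$ on $E(G)$, $h_t$ on $T(G)$, $\partial_tf_t=-\nabla g_t$, $\partial_tg_t=-\nabla h_t$, $g_t>0$, $f_t(x_1)h_t(x_0x_1x_2)=g_t(x_0x_1)g_t(x_1x_2)$. $C_\gamma(t)=f_t(\gamma_0)$ if $L(\gamma)=0$, $g_t(\gamma_0\gamma_1)$ if $L(\gamma)=1$, $\prod_{i=0}^{n-1}g_t(\gamma_i\gamma_{i+1})/\prod_{j=1}^{n-1}f_t(\gamma_j)$ if $n\ge2$. $\mathcal{A}=\{x:\mathcal{E}(x)=\emptyset\}$, $\mathcal{B}=\{x:\mathcal{F}(x)=\emptyset\}$; extremal oriented paths start in $\mathcal{A}$ and end in $\mathcal{B}$; $\mathrm{SE}\Gamma_{1,x}$: oriented paths from a vertex of $\mathcal{A}$ to $x$; $\mathrm{SE}\Gamma_{2,x}$: oriented paths from $x$ to a vertex of $\mathcal{B}$. *)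

From HB Require Import structures.
From mathcomp Require Import all_boot all_order all_algebra.
From mathcomp Require Import boolp classical_sets reals topology normedtype.
Set Implicit Arguments. Unset Strict Implicit. Unset Printing Implicit Defensive.
Import Order.TTheory GRing.Theory Num.Theory.
Import numFieldTopology.Exports numFieldNormedType.Exports.
Local Open Scope classical_set_scope.
Local Open Scope ring_scope.

Section W1Geodesics.
Variables (R : realType) (V : eqType) (nbrs : V -> seq V).

Definition adjb (a b : V) : bool := b \in nbrs a.

Definition lf_graph : Prop :=
  (forall x, uniq (nbrs x)) /\
  (forall x y, y \in nbrs x -> x \in nbrs y) /\
  (forall x, x \notin nbrs x) /\
  (forall x y, exists p : seq V, path adjb x p /\ last x p = y).

Definition walkn (x y : V) (n : nat) : Prop :=
  exists p : seq V, size p = n /\ path adjb x p /\ last x p = y.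

(* graph distance: least length of a walk (0 if none; unused for connected graphs) *)
Definition dist (x y : V) : nat :=
  match pselect (exists n, (fun m => `[< walkn x y m >]) n) with
  | left H => @ex_minn (fun m => `[< walkn x y m >]) H
  | right _ => 0%N
  end.

Definition geod (γ : seq V) : Prop :=
  match γ with
  | [::] => False
  | x0 :: p => path adjb x0 p /\ size p = dist x0 (last x0 p)
  end.

Definition fprob (f : V -> R) : Prop :=
  (forall x, 0 <= f x) /\
  exists s : seq V, uniq s /\ (forall x, x \notin s -> f x = 0) /\ \sum_(x <- s) f x = 1.

Definition coupling_on (f0 f1 : V -> R) (S : seq (V * V)) (pi : V * V -> R) : Prop :=
  uniq S /\ (forall p, 0 <= pi p) /\ (forall p, p \notin S -> pi p = 0) /\
  (forall x, \sum_(p <- S | p.1 == x) pi p = f0 x) /\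
  (forall y, \sum_(p <- S | p.2 == y) pi p = f1 y).

Definition cost (S : seq (V * V)) (pi : V * V -> R) : R :=
  \sum_(p <- S) (dist p.1 p.2)%:R * pi p.

Definition W1 (f0 f1 : V -> R) : R :=
  inf [set c | exists S pi, coupling_on f0 f1 S pi /\ c = cost S pi].

Definition optimal (f0 f1 : V -> R) (pi : V * V -> R) : Prop :=
  exists S, coupling_on f0 f1 S pi /\ cost S pi = W1 f0 f1.

Definition Cset (f0 f1 : V -> R) (x y : V) : Prop :=
  exists pi, optimal f0 f1 pi /\ 0 < pi (x, y).

Definition orient (f0 f1 : V -> R) (x y : V) : Prop :=
  exists γ : seq V, geod γ /\ Cset f0 f1 (head x γ) (last x γ) /\
    exists k, (k.+1 < size γ)%N /\ nth x γ k = x /\ nth x γ k.+1 = y.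

Definition nabla_v (O : V -> V -> Prop) (g : V -> V -> R) (x1 : V) : R :=
  \sum_(x2 <- nbrs x1 | `[< O x1 x2 >]) g x1 x2
  - \sum_(x0 <- nbrs x1 | `[< O x0 x1 >]) g x0 x1.

Definition nabla_e (O : V -> V -> Prop) (h : V -> V -> V -> R) (x1 x2 : V) : R :=
  \sum_(x3 <- nbrs x2 | `[< O x2 x3 >]) h x1 x2 x3
  - \sum_(x0 <- nbrs x1 | `[< O x0 x1 >]) h x0 x1 x2.

Definition deriv01 (F F' : R -> R) : Prop :=
  forall t, 0 <= t <= 1 ->
    (fun u : R => u^-1 * (F (t + u) - F t)) @ within (fun u : R => 0 <= t + u <= 1) (dnbhs (0 : R))
      --> F' t.

Definition W1plus_geodesic (f : R -> V -> R) (g : R -> V -> V -> R)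
    (h : R -> V -> V -> V -> R) : Prop :=
  let O := orient (f 0) (f 1) in
  (forall t, 0 <= t <= 1 -> fprob (f t)) /\
  (forall s t, 0 <= s <= 1 -> 0 <= t <= 1 ->
     W1 (f s) (f t) = `|t - s| * W1 (f 0) (f 1)) /\
  (forall x, deriv01 (fun t => f t x) (fun t => - nabla_v O (g t) x)) /\
  (forall x y, O x y -> deriv01 (fun t => g t x y) (fun t => - nabla_e O (h t) x y)) /\
  (forall t x y, 0 <= t <= 1 -> O x y -> 0 < g t x y) /\
  (forall t x0 x1 x2, 0 <= t <= 1 -> O x0 x1 -> O x1 x2 ->
     f t x1 * h t x0 x1 x2 = g t x0 x1 * g t x1 x2).

Definition Cpath (ft : V -> R) (gt : V -> V -> R) (γ : seq V) : R :=
  match γ with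
  | [::] => 0
  | x0 :: p =>
    if p is [::] then ft x0 else
      (\prod_(0 <= i < size p) gt (nth x0 γ i) (nth x0 γ i.+1))
      / (\prod_(1 <= j < size p) ft (nth x0 γ j))
  end.

Definition opath (O : V -> V -> Prop) (γ : seq V) : Prop :=
  match γ with
  | [::] => False
  | x0 :: _ => forall i, (i.+1 < size γ)%N -> O (nth x0 γ i) (nth x0 γ i.+1)
  end.

(* SE Gamma_{1,x}: oriented paths from a vertex of A to x *)
Definition SEG1 (O : V -> V -> Prop) (x : V) (γ : seq V) : Prop :=
  opath O γ /\ (forall y, ~ O y (head x γ)) /\ last x γ = x.

(* SE Gamma_{2,x}: oriented paths from x to a vertex of B *)
Definition SEG2 (O : V -> V -> Prop) (x : V) (γ : seq V) : Prop :=
  opath O γ /\ head x γ = x /\ (forall y, ~ O (last x γ) y).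

(* concatenation gamma U gamma' (gamma ends where gamma' starts) *)
Definition pcat (γ γ' : seq V) : seq V := γ ++ behead γ'.

End W1Geodesics.

(* For an oriented path a_0 ... a_n write C = g(a_0 a_1) * prod_(i >= 1) g(a_i a_(i+1)) / f(a_i).
   Since f h = g g, the continuity equations give
     d/dt g(ab) = g(ab) * (inflow(a)/f(a) - outflow(b)/f(b)),   d/dt f(b) = inflow(b) - outflow(b),
   so the derivative of C is C * (inflow(a_0)/f(a_0) - outflow(a_n)/f(a_n)): the inner terms
   telescope. On an extremal path no edge enters a_0 and none leaves a_n, hence C is constant
   on [0,1] by the mean value theorem. The formula for f_t(x) is then algebra:
   C_(γ ∪ γ') = C_γ C_γ' / f_t(x), and f_t(x) <> 0 at an inner vertex because g > 0 and f h = g g. *)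

From HB Require Import structures.
From mathcomp Require Import all_boot all_order all_algebra.
From mathcomp Require Import boolp classical_sets reals topology normedtype derive realfun.
From mathcomp Require Import ring lra.
Import Order.TTheory GRing.Theory Num.Theory.
Import numFieldTopology.Exports numFieldNormedType.Exports.
Set Implicit Arguments. Unset Strict Implicit.
Local Open Scope classical_set_scope.
Local Open Scope ring_scope.

Section DifferenceQuotient.
Variable R : realType.

Definition near01 (t : R) := within (fun u : R => 0 <= t + u <= 1) (dnbhs (0 : R)).

Definition deriv01_at (F : R -> R) (t d : R) :=
  (fun u : R => u^-1 * (F (t + u) - F t)) @ near01 t --> d.

Lemma near01_cvg0 t : (fun u => u) @ near01 t --> (0 : R).
Proof. by apply: cvg_trans (cvg_within _) _; apply: cvg_trans (cvg_within _) _. Qed.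

Lemma near01_neq0 t : \forall u \near near01 t, u != 0.
Proof. by rewrite near_withinE /dnbhs near_withinE; near=> u => ? /eqP. Unshelve. all: by end_near. Qed.

Lemma deriv01_at_cvg F t d : deriv01_at F t d -> (fun u => F (t + u)) @ near01 t --> F t.
Proof.
move=> dF.
have : (fun u => F t + u * (u^-1 * (F (t + u) - F t))) @ near01 t --> F t + 0 * d.
  by apply: cvgD; [exact: cvg_cst | apply: cvgM; [exact: near01_cvg0 | exact: dF]].
rewrite mul0r addr0; apply: cvg_trans; apply: near_eq_cvg.
near=> u; have u0 : u != 0 by near: u; exact: near01_neq0.
by rewrite mulrA mulfV // mul1r addrC subrK.
Unshelve. all: by end_near. Qed.

Lemma deriv01_at_cst c t : deriv01_at (fun _ => c) t 0.
Proof.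
rewrite /deriv01_at (_ : (fun u => _) = fun _ => 0); first exact: cvg_cst.
by apply/funext => u; rewrite subrr mulr0.
Qed.

Lemma deriv01_atM F G t a b : deriv01_at F t a -> deriv01_at G t b ->
  deriv01_at (fun s => F s * G s) t (F t * b + G t * a).
Proof.
move=> dF dG.
have : (fun u => F (t + u) * (u^-1 * (G (t + u) - G t)) + G t * (u^-1 * (F (t + u) - F t)))
    @ near01 t --> F t * b + G t * a.
  apply: cvgD; apply: cvgM => //; [exact: deriv01_at_cvg dF | exact: cvg_cst].
apply: cvg_trans; apply: near_eq_cvg; near=> u; ring.
Unshelve. all: by end_near. Qed.

Lemma deriv01_atV G t b : G t != 0 -> deriv01_at G t b ->
  deriv01_at (fun s => (G s)^-1) t (- b / (G t) ^+ 2).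
Proof.
move=> Gt0 dG; have cG := deriv01_at_cvg dG.
have : (fun u => - (u^-1 * (G (t + u) - G t)) * ((G (t + u))^-1 * (G t)^-1))
    @ near01 t --> - b * ((G t)^-1 * (G t)^-1).
  by apply: cvgM; [exact: cvgN | apply: cvgM; [exact: cvgV | exact: cvg_cst]].
rewrite -expr2 exprVn; apply: cvg_trans; apply: near_eq_cvg.
have Gu0 : \forall u \near near01 t, G (t + u) != 0.
  move/cvgrPdist_lt : cG => /(_ `|G t|); rewrite normr_gt0 => /(_ Gt0).
  by apply: filterS => u; apply: contraTneq => ->; rewrite subr0 ltxx.
near=> u; have Gu : G (t + u) != 0 by near: u.
have u0 : u != 0 by near: u; exact: near01_neq0.
by rewrite /=; field; rewrite u0 Gu Gt0.
Unshelve. all: by end_near. Qed.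

Lemma deriv01_at_cvg_along (G : set_system R) {FG : Filter G} F t d :
  deriv01_at F t d -> G --> t -> (\forall s \near G, s != t /\ 0 <= s <= 1) ->
  F @ G --> F t.
Proof.
move=> dF Gt Gin.
have shift_near01 : (fun s => s - t) @ G `=>` near01 t.
  move=> P P0; have {}P0 : \forall u \near (0 : R), u != 0 -> 0 <= t + u <= 1 -> P u := P0.
  have : (fun s => s - t) @ G --> 0 by rewrite -(subrr t); apply: cvgB => //; exact: cvg_cst.
  move=> /(_ _ P0) /=; apply: filterS2 Gin => s [st s01] Ps.
  by apply: Ps; rewrite /= ?subr_eq0 // addrC subrK.
have := cvg_comp _ _ shift_near01 (deriv01_at_cvg dF).
suff -> : (fun u => F (t + u)) \o (fun s => s - t) = F by [].
by apply/funext => s /=; rewrite addrC subrK.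
Qed.

Lemma deriv01_at_is_derive F t d : 0 < t < 1 -> deriv01_at F t d -> is_derive t 1 F d.
Proof.
move=> /andP[t0 t1] dF.
have near_interior : \forall u \near (0 : R), 0 <= t + u <= 1.
  apply/nbhs_ballP; exists (Num.min t (1 - t)); first by rewrite /= lt_min t0 subr_gt0.
  move=> u; rewrite -ball_normE /= sub0r normrN lt_min.
  by move=> /andP[/ltr_normlP[? ?] /ltr_normlP[? ?]]; apply/andP; split; lra.
have : (fun u : R => u^-1 *: ((F \o shift t) (u *: 1) - F t)) @ 0^' --> d.
  rewrite (_ : (fun u => _) = fun u => u^-1 * (F (t + u) - F t)); last first.
    by apply/funext => u; rewrite /= /shift [_%:A]mulr1 (addrC u t).
  apply: cvg_trans dF; apply: cvg_app => P; rewrite /near01 nbhs_simpl /within /= => P0.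
  have D0 : \forall u \near 0^', 0 <= t + u <= 1 by apply: cvg_within.
  by apply: filterS2 D0 P0 => u Du PDu; exact: PDu.
move=> dq; apply: DeriveDef; first by apply/cvg_ex; exists d.
by rewrite /derive; apply: cvg_lim.
Qed.

Lemma deriv01_at_eq0_const F : (forall t, 0 <= t <= 1 -> deriv01_at F t 0) ->
  forall t, 0 <= t <= 1 -> F t = F 0.
Proof.
move=> dF t /andP[t0 t1]; move: t0; rewrite le_eqVlt => /predU1P[<- // | tpos].
have F'0 x : x \in `]0, t[ -> is_derive x 1 F 0.
  rewrite in_itv /= => /andP[x0 xt]; have x1 := lt_le_trans xt t1.
  by apply: deriv01_at_is_derive; [rewrite x0 | apply: dF; rewrite !ltW].
have cF : {within `[0, t], continuous F}.
  apply/(continuous_within_itvP _ tpos); split.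
  - move=> x /F'0 [Fx _]; exact/differentiable_continuous/derivable1_diffP.
  - have dF0 : deriv01_at F 0 0 by apply: dF; rewrite lexx ler01.
    apply: (deriv01_at_cvg_along dF0); first exact: cvg_within.
    near=> s; have s0 : 0 < s by near: s; exact: nbhs_right_gt.
    have s1 : s < 1 by near: s; exact: nbhs_right_lt (lt_le_trans tpos t1).
    by rewrite gt_eqF // !ltW.
  - have dFt : deriv01_at F t 0 by apply: dF; rewrite ltW.
    apply: (deriv01_at_cvg_along dFt); first exact: cvg_within.
    near=> s; have s0 : 0 < s by near: s; exact: nbhs_left_gt.
    have st : s < t by near: s; exact: nbhs_left_lt.
    by rewrite lt_eqF // !ltW // (lt_le_trans st t1).
have [c _] := MVT_segment (ltW tpos) F'0 cF.
by rewrite mul0r => /eqP; rewrite subr_eq0 => /eqP.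
Unshelve. all: by end_near. Qed.

End DifferenceQuotient.

Section PathWeights.
Variables (R : realType) (V : eqType).
Implicit Types (ft : V -> R) (gt : V -> V -> R).

Fixpoint Cratio ft gt (b : V) (s : seq V) : R :=
  if s is c :: s' then gt b c / ft b * Cratio ft gt c s' else 1.

Lemma CratioE ft gt d b s : Cratio ft gt b s =
  (\prod_(0 <= i < size s) gt (nth d (b :: s) i) (nth d (b :: s) i.+1)) /
  (\prod_(0 <= j < size s) ft (nth d (b :: s) j)).
Proof.
elim: s b => [|c s IH] b /=; first by rewrite !big_geq // invr1 mulr1.
by rewrite !big_nat_recl // IH /= invfM; ring.
Qed.

Lemma Cpath1 ft gt a : Cpath ft gt [:: a] = ft a.
Proof. by []. Qed.

Lemma Cpath_cons2 ft gt a b s : Cpath ft gt [:: a, b & s] = gt a b * Cratio ft gt b s.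
Proof. by rewrite /= big_nat_recl // big_add1 (CratioE _ _ a); ring. Qed.

Lemma Cratio_cat ft gt b s1 s2 :
  Cratio ft gt b (s1 ++ s2) = Cratio ft gt b s1 * Cratio ft gt (last b s1) s2.
Proof. by elim: s1 b => [|c s IH] b /=; rewrite ?mul1r // IH mulrA. Qed.

End PathWeights.

Section Orientation.
Variables (V : eqType) (O : V -> V -> Prop).

Definition orel : rel V := fun a b => `[< O a b >].

Lemma opath_path a s : opath O (a :: s) -> path orel a s.
Proof. by move=> Os; apply/(pathP a) => i lt_i_s; apply/asboolP/Os. Qed.

Lemma path_orel_last (a b : V) (s : seq V) : path orel a (b :: s) -> exists p, O p (last b s).
Proof.
elim: s a b => [|c s IH] a b /andP[/asboolP ab Ps]; first by exists a.
exact: IH Ps.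
Qed.

End Orientation.

Section GeodesicPathWeights.
Variables (R : realType) (V : eqType) (nbrs : V -> seq V) (O : V -> V -> Prop).
Variables (f : R -> V -> R) (g : R -> V -> V -> R) (h : R -> V -> V -> V -> R).
Hypothesis df : forall x, deriv01 (fun t => f t x) (fun t => - nabla_v nbrs O (g t) x).
Hypothesis dg : forall x y, O x y ->
  deriv01 (fun t => g t x y) (fun t => - nabla_e nbrs O (h t) x y).
Hypothesis g_gt0 : forall t x y, 0 <= t <= 1 -> O x y -> 0 < g t x y.
Hypothesis fh_gg : forall t x0 x1 x2, 0 <= t <= 1 -> O x0 x1 -> O x1 x2 ->
  f t x1 * h t x0 x1 x2 = g t x0 x1 * g t x1 x2.

Definition outflow t b := \sum_(c <- nbrs b | `[< O b c >]) g t b c.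
Definition inflow t b := \sum_(a <- nbrs b | `[< O a b >]) g t a b.

Lemma g_neq0 t a b : 0 <= t <= 1 -> O a b -> g t a b != 0.
Proof. by move=> t01 ab; rewrite gt_eqF ?g_gt0. Qed.

Lemma f_inner_neq0 t a b c : 0 <= t <= 1 -> O a b -> O b c -> f t b != 0.
Proof.
move=> t01 ab bc; apply/eqP => fb0.
have /esym/eqP := fh_gg t01 ab bc.
by rewrite fb0 mul0r mulf_eq0 (negPf (g_neq0 t01 ab)) (negPf (g_neq0 t01 bc)).
Qed.

Lemma h_gg_f t a b c : 0 <= t <= 1 -> O a b -> O b c -> h t a b c = g t a b * g t b c / f t b.
Proof.
move=> t01 ab bc; rewrite -(fh_gg t01 ab bc) (mulrC (f t b)) mulfK //; exact: f_inner_neq0 ab bc.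
Qed.

Lemma nabla_e_flows t a b : 0 <= t <= 1 -> O a b ->
  nabla_e nbrs O (h t) a b = g t a b * (outflow t b / f t b - inflow t a / f t a).
Proof.
move=> t01 ab.
have out_h : \sum_(c <- nbrs b | `[< O b c >]) h t a b c = g t a b / f t b * outflow t b.
  by rewrite /outflow big_distrr; apply: eq_bigr => c /asboolP bc; rewrite h_gg_f // mulrAC.
have in_h : \sum_(c <- nbrs a | `[< O c a >]) h t c a b = g t a b / f t a * inflow t a.
  by rewrite /inflow big_distrr; apply: eq_bigr => c /asboolP ca; rewrite h_gg_f //=; ring.
by rewrite /nabla_e out_h in_h; ring.
Qed.

Definition outrate t b := outflow t b / f t b.

Lemma deriv01_f t b : 0 <= t <= 1 ->
  deriv01_at (fun s => f s b) t (inflow t b - outflow t b).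
Proof. by move=> t01; rewrite -opprB; exact: df. Qed.

Lemma deriv01_g t a b : 0 <= t <= 1 -> O a b ->
  deriv01_at (fun s => g s a b) t (g t a b * (inflow t a / f t a - outrate t b)).
Proof. by move=> t01 ab; rewrite mulrBr -opprB -mulrBr -nabla_e_flows //; exact: dg. Qed.

Lemma deriv01_Cratio t a b s : 0 <= t <= 1 -> O a b -> path (orel O) b s ->
  deriv01_at (fun u => Cratio (f u) (g u) b s) t
    (Cratio (f t) (g t) b s * (outrate t b - outrate t (last b s))).
Proof.
move=> t01; elim: s a b => [|c s IH] a b ab /=.
  by rewrite subrr mulr0 => _; exact: deriv01_at_cst.
move=> /andP[/asboolP bc Ps]; have fb := f_inner_neq0 t01 ab bc.
have := deriv01_atM (deriv01_atM (deriv01_g t01 bc) (deriv01_atV fb (deriv01_f t01)))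
  (IH b c bc Ps).
congr deriv01_at; set rc := outrate t c; set rl := outrate t (last c s).
by rewrite /outrate; field.
Qed.

Lemma inflow_eq0 t a : (forall y, ~ O y a) -> inflow t a = 0.
Proof. by move=> noin; rewrite /inflow big1 // => y /asboolP /noin. Qed.

Lemma outflow_eq0 t b : (forall y, ~ O b y) -> outflow t b = 0.
Proof. by move=> noout; rewrite /outflow big1 // => y /asboolP /noout. Qed.

Lemma deriv01_Cpath_extremal t a s : 0 <= t <= 1 ->
  (forall y, ~ O y a) -> path (orel O) a s -> (forall y, ~ O (last a s) y) ->
  deriv01_at (fun u => Cpath (f u) (g u) (a :: s)) t 0.
Proof.
move=> t01 noin; case: s => [|b s] Ps noout.
  by rewrite /= -(subrr 0) -{1}(inflow_eq0 t noin) -(outflow_eq0 t noout); exact: deriv01_f.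
move: Ps => /= /andP[/asboolP ab Ps].
have := deriv01_atM (deriv01_g t01 ab) (deriv01_Cratio t01 ab Ps).
have -> : (fun u => Cpath (f u) (g u) [:: a, b & s]) = fun u => g u a b * Cratio (f u) (g u) b s.
  by apply/funext => u; exact: Cpath_cons2.
by congr deriv01_at; rewrite (inflow_eq0 t noin) /outrate (outflow_eq0 t noout); ring.
Qed.

Lemma Cpath_extremal_const t a s : 0 <= t <= 1 ->
  (forall y, ~ O y a) -> path (orel O) a s -> (forall y, ~ O (last a s) y) ->
  Cpath (f t) (g t) (a :: s) = Cpath (f 0) (g 0) (a :: s).
Proof.
move=> t01 noin Ps noout.
by apply: (deriv01_at_eq0_const (F := fun u => Cpath (f u) (g u) (a :: s))) => // u u01;
  exact: deriv01_Cpath_extremal.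
Qed.

Lemma Cratio_neq0 t a b s : 0 <= t <= 1 -> O a b -> path (orel O) b s ->
  Cratio (f t) (g t) b s != 0.
Proof.
move=> t01; elim: s a b => [|c s IH] a b ab /=; first by rewrite oner_neq0.
move=> /andP[/asboolP bc Ps].
by rewrite !mulf_neq0 ?invr_eq0 ?(g_neq0 t01 bc) ?(f_inner_neq0 t01 ab bc) ?(IH b c).
Qed.

Lemma Cpath_split t a s1 x s2 : 0 <= t <= 1 ->
  path (orel O) a s1 -> last a s1 = x -> path (orel O) x s2 ->
  f t x = Cpath (f t) (g t) (a :: s1) * Cpath (f t) (g t) (x :: s2)
          / Cpath (f t) (g t) (a :: s1 ++ s2).
Proof.
move=> t01; case: s1 => [|b s1] P1 ax; rewrite /= in ax; subst x.
  case: s2 => [|c s2] P2; rewrite cat0s ?Cpath_cons2 Cpath1.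
    by have [->|fa] := eqVneq (f t a) 0; [rewrite !mul0r | rewrite mulfK].
  case/andP: P2 => /asboolP ac P2.
  by rewrite mulfK // mulf_neq0 ?(g_neq0 t01 ac) ?(Cratio_neq0 t01 ac).
have [p px] := path_orel_last P1; case/andP: P1 => /asboolP ab P1.
have gQ : g t a b * Cratio (f t) (g t) b s1 != 0.
  by rewrite mulf_neq0 ?(g_neq0 t01 ab) ?(Cratio_neq0 t01 ab).
rewrite cat_cons !Cpath_cons2 Cratio_cat.
case: s2 => [|c s2] P2; first by rewrite Cpath1 /= mulr1 mulrAC divff // mul1r.
case/andP: P2 => /asboolP xc P2.
have fx := f_inner_neq0 t01 px xc.
rewrite Cpath_cons2 /=; field.
by rewrite fx (Cratio_neq0 t01 xc P2) (g_neq0 t01 xc) (Cratio_neq0 t01 ab P1) (g_neq0 t01 ab).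
Qed.

End GeodesicPathWeights.

Theorem proposition3p9 (R : realType) (V : eqType) (nbrs : V -> seq V)
    (HG : lf_graph nbrs)
    (f : R -> V -> R) (g : R -> V -> V -> R) (h : R -> V -> V -> V -> R)
    (Hgeo : W1plus_geodesic nbrs f g h)
    (x : V) (γ γ' : seq V)
    (H1 : SEG1 (orient nbrs (f 0) (f 1)) x γ)
    (H2 : SEG2 (orient nbrs (f 0) (f 1)) x γ') :
  forall t : R, 0 <= t <= 1 ->
    Cpath (f t) (g t) (pcat γ γ') = Cpath (f 0) (g 0) (pcat γ γ') /\
    f t x = Cpath (f t) (g t) γ * Cpath (f t) (g t) γ' / Cpath (f t) (g t) (pcat γ γ').
Proof.
move=> t t01; case: Hgeo => _ [_ [df [dg [g_gt0 fh_gg]]]].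
case: γ H1 => [|a s1] [/opath_path P1 [noin ax]] //.
case: γ' H2 => [|x' s2] [/opath_path P2 [x'x noout]] //.
rewrite /= in noin ax x'x noout; subst x'.
have P12 : path (orel (orient nbrs (f 0) (f 1))) a (s1 ++ s2) by rewrite cat_path ax P1.
have -> : pcat (a :: s1) (x :: s2) = a :: s1 ++ s2 by [].
split; first by apply: (Cpath_extremal_const df dg g_gt0 fh_gg t01 noin P12); rewrite last_cat ax.
exact: (Cpath_split g_gt0 fh_gg t01 P1 ax P2).
Qed.
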